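(* Let $\mathcal{C}$ be a $t$-periodic triangulated category over the finite field $k$, with $t>1$ odd, and let $Z\xrightarrow{l}M\xrightarrow{m}L\xrightarrow{n}Z[1]$ be a triangle in $\mathcal{C}$. Put $n\operatorname{Hom}(Z[1],L)=\{b\in\operatorname{End}L\mid b=ns \text{ for some } s\in\operatorname{Hom}(Z[1],L)\}$ and $\operatorname{Hom}(Z[1],L)n=\{d\in\operatorname{End}Z[1]\mid d=sn \text{ for some } s\in\operatorname{Hom}(Z[1],L)\}$. Then \begin{enumerate} \item $|n\operatorname{Hom}(Z[1],L)|=\Big(\prod_{i=1}^t\frac{|\operatorname{Hom}(M[i],L)|^{(-1)^i}}{|\operatorname{Hom}(Z[i],L)|^{(-1)^i}\,|\operatorname{Hom}(L[i],L)|^{(-1)^i}}\Big)^{1/2}$; \item $|\operatorname{Hom}(Z[1],L)n|=\Big(\prod_{i=1}^t\frac{|\operatorname{Hom}(Z[i],M)|^{(-1)^i}}{|\operatorname{Hom}(Z[i],L)|^{(-1)^i}\,|\operatorname{Hom}(Z[i],Z)|^{(-1)^i}}\Big)^{1/2}$. \end{enumerate}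
   Context: $k$ is a finite field with $q$ elements. A $t$-periodic triangulated category is a $k$-additive triangulated category $\mathcal{C}$ with translation functor $T=[1]$ such that (1) $\operatorname{Hom}(X,Y)$ is a finite-dimensional $k$-vector space for all $X,Y$; (2) $\operatorname{End}X$ is a finite-dimensional local $k$-algebra for every indecomposable $X$; (3) $[1]^t=[t]\cong 1_{\mathcal{C}}$. Composition is written left-to-right: for $f:X\to Y$, $g:Y\to Z$, $fg:X\to Z$ denotes ''first $f$, then $g$''. $|S|$ denotes the cardinality of a finite set $S$. *)

From HB Require Import structures.
From mathcomp Require Import all_boot all_order all_algebra all_field.
Set Implicit Arguments. Unset Strict Implicit. Unset Printing Implicit Defensive.
Import GRing.Theory Num.Theory.
Local Open Scope ring_scope.

(* Composition is written left-to-right: comp f g = "first f, then g". *)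
Record tricat (k : finFieldType) := TriCat {
  Obj : Type;
  Hom : Obj -> Obj -> finLmodType k;
  comp : forall X Y Z : Obj, Hom X Y -> Hom Y Z -> Hom X Z;
  idm : forall X : Obj, Hom X X;
  comp_assoc : forall X Y Z W (f : Hom X Y) (g : Hom Y Z) (h : Hom Z W),
      comp (comp f g) h = comp f (comp g h);
  comp_idl : forall X Y (f : Hom X Y), comp (idm X) f = f;
  comp_idr : forall X Y (f : Hom X Y), comp f (idm Y) = f;
  comp_linl : forall X Y Z (a : k) (f f' : Hom X Y) (g : Hom Y Z),
      comp (a *: f + f') g = a *: comp f g + comp f' g;
  comp_linr : forall X Y Z (a : k) (f : Hom X Y) (g g' : Hom Y Z),
      comp f (a *: g + g') = a *: comp f g + comp f g';
  zobj : Obj;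
  zobj_id : idm zobj = 0;
  biprod : forall X Y : Obj, exists P : Obj, exists (e1 : Hom X P) (e2 : Hom Y P)
      (q1 : Hom P X) (q2 : Hom P Y),
      [/\ comp e1 q1 = idm X, comp e2 q2 = idm Y, comp e1 q2 = 0,
          comp e2 q1 = 0 & comp q1 e1 + comp q2 e2 = idm P];
  sh : Obj -> Obj;
  shm : forall X Y : Obj, Hom X Y -> Hom (sh X) (sh Y);
  shm_lin : forall X Y (a : k) (f g : Hom X Y), shm (a *: f + g) = a *: shm f + shm g;
  shm_id : forall X, shm (idm X) = idm (sh X);
  shm_comp : forall X Y Z (f : Hom X Y) (g : Hom Y Z),
      shm (comp f g) = comp (shm f) (shm g);
  shm_bij : forall X Y : Obj, bijective (@shm X Y);
  sh_esurj : forall Y : Obj, exists X : Obj, exists (a : Hom (sh X) Y) (b : Hom Y (sh X)),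
      comp a b = idm (sh X) /\ comp b a = idm Y;
  dist : forall X Y Z : Obj, Hom X Y -> Hom Y Z -> Hom Z (sh X) -> Prop;
  dist_id : forall X : Obj, dist (idm X) (0 : Hom X zobj) (0 : Hom zobj (sh X));
  dist_ext : forall X Y (f : Hom X Y), exists Z : Obj,
      exists (g : Hom Y Z) (h : Hom Z (sh X)), dist f g h;
  dist_iso : forall X Y Z X' Y' Z' (f : Hom X Y) (g : Hom Y Z) (h : Hom Z (sh X))
      (f' : Hom X' Y') (g' : Hom Y' Z') (h' : Hom Z' (sh X'))
      (a : Hom X X') (a' : Hom X' X) (b : Hom Y Y') (b' : Hom Y' Y)
      (c : Hom Z Z') (c' : Hom Z' Z),
      comp a a' = idm X -> comp a' a = idm X' ->
      comp b b' = idm Y -> comp b' b = idm Y' ->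
      comp c c' = idm Z -> comp c' c = idm Z' ->
      comp f b = comp a f' -> comp g c = comp b g' -> comp h (shm a) = comp c h' ->
      dist f g h -> dist f' g' h';
  dist_rot : forall X Y Z (f : Hom X Y) (g : Hom Y Z) (h : Hom Z (sh X)),
      dist f g h <-> dist g h (- shm f);
  dist_morph : forall X Y Z X' Y' Z' (f : Hom X Y) (g : Hom Y Z) (h : Hom Z (sh X))
      (f' : Hom X' Y') (g' : Hom Y' Z') (h' : Hom Z' (sh X'))
      (a : Hom X X') (b : Hom Y Y'),
      dist f g h -> dist f' g' h' -> comp f b = comp a f' ->
      exists c : Hom Z Z', comp g c = comp b g' /\ comp h (shm a) = comp c h';
  dist_oct : forall X Y Z Z' X' Y' (f : Hom X Y) (g : Hom Y Z)
      (u : Hom Y Z') (u' : Hom Z' (sh X))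
      (v : Hom Z X') (v' : Hom X' (sh Y))
      (w : Hom Z Y') (w' : Hom Y' (sh X)),
      dist f u u' -> dist g v v' -> dist (comp f g) w w' ->
      exists (a : Hom Z' Y') (b : Hom Y' X'),
        [/\ dist a b (comp v' (shm u)), comp u a = comp g w, comp a w' = u',
            comp w b = v & comp b v' = comp w' (shm f)]
}.

Arguments Hom {k} _ _ _.
Arguments comp {k} _ {X Y Z}.
Arguments idm {k} _ X.
Arguments sh {k} _.
Arguments shm {k} _ {X Y}.
Arguments dist {k} _ {X Y Z}.

Section Defs.
Variables (k : finFieldType) (C : tricat k).

Fixpoint shn (n : nat) (X : Obj C) : Obj C :=
  if n is n'.+1 then sh C (shn n' X) else X.

Fixpoint shmn (n : nat) {X Y : Obj C} : Hom C X Y -> Hom C (shn n X) (shn n Y) :=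
  match n with
  | 0 => fun f => f
  | n'.+1 => fun f => shm C (shmn n' f)
  end.

Definition is_iso (X Y : Obj C) (f : Hom C X Y) : Prop :=
  exists g : Hom C Y X, comp C f g = idm C X /\ comp C g f = idm C Y.

Definition indecomposable (X : Obj C) : Prop :=
  idm C X <> 0 /\
  forall (Y1 Y2 P : Obj C) (e1 : Hom C Y1 P) (e2 : Hom C Y2 P)
         (q1 : Hom C P Y1) (q2 : Hom C P Y2) (a : Hom C X P),
    comp C e1 q1 = idm C Y1 -> comp C e2 q2 = idm C Y2 -> comp C e1 q2 = 0 ->
    comp C e2 q1 = 0 -> comp C q1 e1 + comp C q2 e2 = idm C P ->
    is_iso a -> idm C Y1 = 0 \/ idm C Y2 = 0.

Definition local_end (X : Obj C) : Prop :=
  idm C X <> 0 /\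
  forall e : Hom C X X, is_iso e \/ is_iso (idm C X - e).

Definition shift_periodic (t : nat) : Prop :=
  exists eta : forall X : Obj C, Hom C (shn t X) X,
    (forall X, is_iso (eta X)) /\
    (forall (X Y : Obj C) (f : Hom C X Y), comp C (shmn t f) (eta Y) = comp C (eta X) f).

(* t-periodic triangulated category (Hom finiteness is built in) *)
Definition periodic_tricat (t : nat) : Prop :=
  (forall X : Obj C, indecomposable X -> local_end X) /\ shift_periodic t.

End Defs.

Arguments shn {k} C n X.
Arguments shmn {k} C n {X Y}.

From Pilot Require Import Defs.
From HB Require Import structures.
From mathcomp Require Import all_boot all_order all_algebra all_field.
Import Defs.
Import GRing.Theory Num.Theory.
Local Open Scope ring_scope.
Set Implicit Arguments. Unset Strict Implicit.

(* Applying Hom(-, L), resp. Hom(Z[i], -), to the shifts of the triangle gives long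
   exact sequences of finite k-spaces, so every Hom set in the formula has as many
   elements as the kernel times the image of the next map.  Let c_i be the number of
   u : L[i] -> L with m[i]u = 0, resp. the size of {sn | s : Z[i+1] -> L}.  Then the
   i-th factor of the product is (c_(i-1) c_i)^(+-1), with alternating sign, so for
   odd t the product telescopes to c_0 c_t.  Periodicity gives c_t = c_0, and
   exactness identifies c_0 with the cardinality on the left. *)

Section Additivity.
Variables (k : finFieldType) (C : tricat k).

Lemma compBr (X Y Z : Obj C) (f : Hom C X Y) (g g' : Hom C Y Z) :
  comp C f (g - g') = comp C f g - comp C f g'.
Proof. by have := comp_linr (-1) f g' g; rewrite !scaleN1r addrC => ->; rewrite addrC. Qed.

Lemma compBl (X Y Z : Obj C) (f f' : Hom C X Y) (g : Hom C Y Z) :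
  comp C (f - f') g = comp C f g - comp C f' g.
Proof. by have := comp_linl (-1) f' f g; rewrite !scaleN1r addrC => ->; rewrite addrC. Qed.

Lemma comp0r (X Y Z : Obj C) (f : Hom C X Y) : comp C f (0 : Hom C Y Z) = 0.
Proof. by rewrite -(subrr 0) compBr subrr. Qed.

Lemma comp0l (X Y Z : Obj C) (g : Hom C Y Z) : comp C (0 : Hom C X Y) g = 0.
Proof. by rewrite -(subrr 0) compBl subrr. Qed.

Lemma compNr (X Y Z : Obj C) (f : Hom C X Y) (g : Hom C Y Z) :
  comp C f (- g) = - comp C f g.
Proof. by rewrite -sub0r compBr comp0r sub0r. Qed.

Lemma compNl (X Y Z : Obj C) (f : Hom C X Y) (g : Hom C Y Z) :
  comp C (- f) g = - comp C f g.
Proof. by rewrite -sub0r compBl comp0l sub0r. Qed.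

Lemma shmB (X Y : Obj C) (f g : Hom C X Y) : shm C (f - g) = shm C f - shm C g.
Proof. by have := shm_lin (-1) g f; rewrite !scaleN1r addrC => ->; rewrite addrC. Qed.

Lemma shm0 (X Y : Obj C) : shm C (0 : Hom C X Y) = 0.
Proof. by rewrite -(subrr 0) shmB subrr. Qed.

Lemma shmN (X Y : Obj C) (f : Hom C X Y) : shm C (- f) = - shm C f.
Proof. by rewrite -sub0r shmB shm0 sub0r. Qed.

Lemma shm_inj (X Y : Obj C) : injective (@shm k C X Y).
Proof. exact/bij_inj/shm_bij. Qed.

Lemma shm_surj (X Y : Obj C) (g : Hom C (sh C X) (sh C Y)) : exists f, g = shm C f.
Proof. by case: (shm_bij X Y) => h _ hK; exists (h g); rewrite hK. Qed.

End Additivity.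

Lemma dist_rotate (k : finFieldType) (C : tricat k) (X Y Z : Obj C)
    (f : Hom C X Y) (g : Hom C Y Z) (h : Hom C Z (sh C X)) :
  dist C f g h -> dist C g h (- shm C f).
Proof. exact: (dist_rot f g h).1. Qed.

Section Triangles.
Variables (k : finFieldType) (C : tricat k).
Variables (X Y Z : Obj C) (f : Hom C X Y) (g : Hom C Y Z) (h : Hom C Z (sh C X)).
Hypothesis fgh : dist C f g h.

Lemma dist_comp_eq0 : comp C f g = 0.
Proof.
have [c [<- _]] := dist_morph (a := idm C X) (b := f) (dist_id X) fgh erefl.
by rewrite comp0l.
Qed.

Lemma dist_precomp_ker (W : Obj C) :
  [set u : Hom C Y W | comp C f u == 0] = [set comp C g v | v : Hom C Z W].
Proof.
apply/setP => u; rewrite inE; apply/eqP/imsetP => [fu0 | [v _ ->]]; last first.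
  by rewrite -comp_assoc dist_comp_eq0 comp0l.
(* Write W = W0[1]; the trivial triangle rotated twice is 0 -> W0[1] -> W0[1] -> 0[1], and
   TR3 completes the square f (u b) = 0 to a factorisation of u through g. *)
have [W0 [a [b [ab ba]]]] := sh_esurj W.
have zero_tri := dist_rotate (dist_rotate (dist_id W0)).
have fub : comp C f (comp C u b) = comp C (0 : Hom C X (zobj C)) 0.
  by rewrite -comp_assoc fu0 !comp0l.
have [c [gc _]] := dist_morph fgh zero_tri fub.
exists (comp C (- c) a) => //.
by rewrite -comp_assoc compNr gc shm_id compNr comp_idr opprK comp_assoc ba comp_idr.
Qed.

Lemma dist_postcomp_ker (W : Obj C) :
  [set u : Hom C W Y | comp C u g == 0] = [set comp C v f | v : Hom C W X].
Proof.
apply/setP => u; rewrite inE; apply/eqP/imsetP => [ug0 | [v _ ->]]; last first.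
  by rewrite comp_assoc dist_comp_eq0 comp0r.
have zero_tri := dist_rotate (dist_id W).
have ug : comp C (0 : Hom C W (zobj C)) (0 : Hom C (zobj C) Z) = comp C u g.
  by rewrite ug0 comp0l.
have [c [_ ushift]] := dist_morph zero_tri (dist_rotate fgh) ug.
have [v cv] := shm_surj c.
exists v => //; apply: (@shm_inj _ _ W Y); apply: oppr_inj.
by rewrite shm_comp -cv -compNr -ushift compNl shm_id comp_idl.
Qed.

Lemma dist_shift : dist C (shm C f) (shm C g) (- shm C h).
Proof.
have fgh3 := dist_rotate (dist_rotate (dist_rotate fgh)).
have invN (A : Obj C) : comp C (- idm C A) (- idm C A) = idm C A.
  by rewrite compNl compNr opprK comp_idl.
apply: (dist_iso (a := - idm C (sh C X)) (a' := - idm C (sh C X))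
                 (b := idm C (sh C Y)) (b' := idm C (sh C Y))
                 (c := - idm C (sh C Z)) (c' := - idm C (sh C Z))) fgh3;
  rewrite ?invN ?comp_idl ?comp_idr //.
- by rewrite compNl comp_idl.
- by rewrite compNr comp_idr opprK.
- by rewrite shmN shm_id !compNr !compNl comp_idr comp_idl.
Qed.

End Triangles.

Lemma dist_shmn (k : finFieldType) (C : tricat k) (X Y Z : Obj C)
    (f : Hom C X Y) (g : Hom C Y Z) (h : Hom C Z (sh C X)) (i : nat) :
  dist C f g h -> exists h' : Hom C (shn C i Z) (shn C i.+1 X),
    dist C (shmn C i f) (shmn C i g) h'.
Proof.
move=> fgh; elim: i => [|i [h' fgh']]; first by exists h.
by exists (- shm C h'); apply: dist_shift.
Qed.

Lemma card_ker_mul_image (V W : finZmodType) (phi : V -> W) :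
  {morph phi : x y / x - y} ->
  #|V| = (#|[set x | phi x == 0%R]| * #|[set phi x | x : V]|)%N.
Proof.
move=> phiB.
have phi0 : phi 0 = 0 by rewrite -(subrr (0 : V)) phiB subrr.
have phiN y : phi (- y) = - phi y by rewrite -sub0r phiB phi0 sub0r.
have phiD x y : phi (x + y) = phi x + phi y by rewrite -[y]opprK phiB phiN !opprK.
pose sec y := odflt 0 [pick x | phi x == y].
have secK x : phi (sec (phi x)) = phi x.
  by rewrite /sec; case: pickP => [x' /eqP -> // | /(_ x)]; rewrite eqxx.
pose F x := (x - sec (phi x), phi x).
have F_inj : injective F by move=> x y [+ exy]; rewrite exy; apply: addIr.
rewrite -cardsX -cardsT -(card_imset _ F_inj); apply: eq_card => -[a b].
rewrite inE /=; apply/imsetP/andP => [[x _ [-> ->]] | []].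
  by rewrite inE phiB secK subrr imset_f.
rewrite inE => /eqP pa /imsetP [x _ ->]; exists (a + sec (phi x)) => //.
have phi_ax : phi (a + sec (phi x)) = phi x by rewrite phiD pa add0r secK.
by rewrite /F phi_ax addrK.
Qed.

Section Counting.
Variables (k : finFieldType) (C : tricat k).

Lemma card_Hom_gt0 (X Y : Obj C) : (0 < #|Hom C X Y|)%N.
Proof. by apply/card_gt0P; exists 0. Qed.

Lemma card_Hom_precomp (X Y W : Obj C) (f : Hom C X Y) :
  #|Hom C Y W| =
  (#|[set u : Hom C Y W | comp C f u == 0%R]| * #|[set comp C f u | u : Hom C Y W]|)%N.
Proof. by apply: card_ker_mul_image => u v; rewrite compBr. Qed.

Lemma card_Hom_postcomp (W X Y : Obj C) (g : Hom C X Y) :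
  #|Hom C W X| =
  (#|[set u : Hom C W X | comp C u g == 0%R]| * #|[set comp C u g | u : Hom C W X]|)%N.
Proof. by apply: card_ker_mul_image => u v; rewrite compBl. Qed.

Variables (X Y Z : Obj C) (f : Hom C X Y) (g : Hom C Y Z) (h : Hom C Z (sh C X)).
Hypothesis fgh : dist C f g h.

Lemma card_Hom_dist_src (W : Obj C) :
  #|Hom C Y W| =
  (#|[set comp C g v | v : Hom C Z W]| * #|[set comp C f u | u : Hom C Y W]|)%N.
Proof. by rewrite (card_Hom_precomp W f) (dist_precomp_ker fgh). Qed.

Lemma card_Hom_dist_tgt (W : Obj C) :
  #|Hom C W Y| =
  (#|[set comp C v f | v : Hom C W X]| * #|[set comp C u g | u : Hom C W Y]|)%N.
Proof. by rewrite (card_Hom_postcomp W g) (dist_postcomp_ker fgh). Qed.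

End Counting.

Section Invariance.
Variables (k : finFieldType) (C : tricat k).

Lemma imset_precompN (X Y W : Obj C) (f : Hom C X Y) :
  [set comp C (- f) u | u : Hom C Y W] = [set comp C f u | u : Hom C Y W].
Proof.
by apply/setP => v; apply/imsetP/imsetP => -[u _ ->]; exists (- u);
  rewrite // compNl compNr ?opprK.
Qed.

Lemma ker_postcompN (W X Y : Obj C) (g : Hom C X Y) :
  [set u : Hom C W X | comp C u (- g) == 0] = [set u : Hom C W X | comp C u g == 0].
Proof. by apply/setP => u; rewrite !inE compNr oppr_eq0. Qed.

Lemma card_ker_postcomp_shm (W X Y : Obj C) (g : Hom C X Y) :
  #|[set u : Hom C (sh C W) (sh C X) | comp C u (shm C g) == 0]| =
  #|[set u : Hom C W X | comp C u g == 0]|.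
Proof.
rewrite -(card_imset _ (@shm_inj _ C W X)); apply: eq_card => v.
have [u ->] := shm_surj v.
rewrite (mem_imset _ _ (@shm_inj _ C W X)) !inE -shm_comp -(@shm0 _ C W Y).
exact: (inj_eq (@shm_inj _ C W Y)).
Qed.

Lemma is_iso_shm (X Y : Obj C) (e : Hom C X Y) : is_iso e -> is_iso (shm C e).
Proof.
by case=> e' [ee' e'e]; exists (shm C e'); rewrite -!shm_comp ee' e'e !shm_id.
Qed.

Lemma iso_comp_inj (X Y W : Obj C) (e : Hom C X Y) :
  is_iso e -> injective (fun u : Hom C Y W => comp C e u).
Proof.
case=> e' [_ e'e] u v /= euv.
by rewrite -(comp_idl u) -(comp_idl v) -e'e !comp_assoc euv.
Qed.

Lemma card_ker_precomp_iso (A B A' B' W : Obj C) (f : Hom C A B) (f' : Hom C A' B')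
    (eA : Hom C A' A) (eB : Hom C B' B) :
  is_iso eA -> is_iso eB -> comp C f' eB = comp C eA f ->
  #|[set u : Hom C B' W | comp C f' u == 0]| = #|[set u : Hom C B W | comp C f u == 0]|.
Proof.
move=> isoA isoB sq; have [eB' [eBB' eB'B]] := isoB.
rewrite -(card_imset _ (iso_comp_inj (W:=W) isoB)); apply: eq_card => v.
apply/idP/imsetP => [| [u]]; rewrite !inE => /eqP fu0.
  exists (comp C eB' v); last by rewrite -comp_assoc eBB' comp_idl.
  rewrite inE -(inj_eq (iso_comp_inj (W:=W) isoA)) comp0r -comp_assoc -sq comp_assoc.
  by rewrite -(comp_assoc eB) eBB' comp_idl fu0.
by move=> ->; rewrite -comp_assoc sq comp_assoc fu0 comp0r.
Qed.

Lemma card_imset_postcomp_iso (X X' W V : Obj C) (e : Hom C X X') (g : Hom C W V) :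
  is_iso e ->
  #|[set comp C u g | u : Hom C X' W]| = #|[set comp C u g | u : Hom C X W]|.
Proof.
move=> isoe; have [e' [ee' e'e]] := isoe.
rewrite -(card_imset _ (iso_comp_inj (W:=V) isoe)); apply: eq_card => v.
apply/imsetP/imsetP => [[_ /imsetP [u _ ->] ->] | [u _ ->]].
  by exists (comp C e u); rewrite // comp_assoc.
exists (comp C (comp C e' u) g); first exact: imset_f.
by rewrite -!comp_assoc ee' comp_idl.
Qed.

End Invariance.

Lemma prod_sign_ratio_telescope (F : numFieldType) (t : nat) (a b c : nat -> nat) :
  odd t -> (forall j, 0 < c j * a j)%N -> (forall j, 0 < a j * b j)%N ->
  \prod_(0 <= j < t)
     (((a j.+1 * b j.+1)%N%:R : F) ^ ((-1) ^+ j.+1 : int)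
      / (((b j.+1 * c j)%N%:R : F) ^ ((-1) ^+ j.+1 : int)
         * ((c j.+1 * a j.+1)%N%:R : F) ^ ((-1) ^+ j.+1 : int)))
  = (c 0 * c t)%N%:R.
Proof.
move=> odd_t ca_gt0 ab_gt0.
have c_gt0 j : (0 < c j)%N by move: (ca_gt0 j); rewrite muln_gt0 => /andP[].
have a_gt0 j : (0 < a j)%N by move: (ab_gt0 j); rewrite muln_gt0 => /andP[].
have b_gt0 j : (0 < b j)%N by move: (ab_gt0 j); rewrite muln_gt0 => /andP[].
have nz (u : nat) : (0 < u)%N -> u%:R != 0 :> F by rewrite pnatr_eq0 -lt0n.
pose P j : F := (c j * c j.+1)%N%:R.
have termE j : ((a j.+1 * b j.+1)%N%:R : F) ^ ((-1) ^+ j.+1 : int)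
      / (((b j.+1 * c j)%N%:R : F) ^ ((-1) ^+ j.+1 : int)
         * ((c j.+1 * a j.+1)%N%:R : F) ^ ((-1) ^+ j.+1 : int))
    = if odd j.+1 then P j else (P j)^-1.
  rewrite /P -signr_odd !natrM; case: (odd j.+1); rewrite ?expr1 ?expr0 ?exprN1 ?expr1z.
  - by rewrite !invfM !invrK -!mulrA (mulKf (nz _ (b_gt0 _))) [(c j.+1)%:R * _]mulrC mulrCA
      (mulKf (nz _ (a_gt0 _))).
  - by rewrite !invfM -!mulrA (mulVKf (nz _ (b_gt0 _))) [(c j.+1)%:R^-1 * _]mulrC mulrCA
      (mulVKf (nz _ (a_gt0 _))).
under eq_bigr do rewrite termE.
rewrite -(odd_double_half t) odd_t /=; elim: t./2 => [|j IH]; first by rewrite big_nat1.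
rewrite doubleS big_nat_recr // big_nat_recr //= IH /P /= odd_double /= !natrM invfM.
by rewrite -!mulrA (mulVKf (nz _ (c_gt0 _))) (mulKf (nz _ (c_gt0 _))).
Qed.

Lemma sqrtC_prod_sign_ratio (F : numClosedFieldType) (t : nat) (a b c : nat -> nat) :
  odd t -> c t = c 0 -> (forall j, 0 < c j * a j)%N -> (forall j, 0 < a j * b j)%N ->
  sqrtC (\prod_(0 <= j < t)
     (((a j.+1 * b j.+1)%N%:R : F) ^ ((-1) ^+ j.+1 : int)
      / (((b j.+1 * c j)%N%:R : F) ^ ((-1) ^+ j.+1 : int)
         * ((c j.+1 * a j.+1)%N%:R : F) ^ ((-1) ^+ j.+1 : int))))
  = (c 0)%:R.
Proof.
by move=> odd_t ct *; rewrite prod_sign_ratio_telescope // ct natrM -expr2 sqrCK ?ler0n.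
Qed.

Section Periodicity.
Variables (k : finFieldType) (C : tricat k) (t : nat).
Hypothesis periodic : shift_periodic C t.

Lemma card_ker_precomp_period (A B W : Obj C) (f : Hom C A B) :
  #|[set u : Hom C (shn C t B) W | comp C (shmn C t f) u == 0]| =
  #|[set u : Hom C B W | comp C f u == 0]|.
Proof.
have [eta [eta_iso eta_nat]] := periodic.
exact: card_ker_precomp_iso (eta_iso A) (eta_iso B) (eta_nat A B f).
Qed.

Lemma card_imset_postcomp_period (X W V : Obj C) (g : Hom C W V) :
  #|[set comp C u g | u : Hom C (shn C t.+1 X) W]| =
  #|[set comp C u g | u : Hom C (sh C X) W]|.
Proof.
have [eta [eta_iso _]] := periodic.
by rewrite (card_imset_postcomp_iso _ (is_iso_shm (eta_iso X))).
Qed.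

End Periodicity.

Section TriangleCounts.
Variables (k : finFieldType) (C : tricat k).
Variables (Z M L : Obj C) (l : Hom C Z M) (m : Hom C M L) (n : Hom C L (sh C Z)).
Hypothesis lmn : dist C l m n.

Lemma card_Hom_shn_M_L (j : nat) :
  #|Hom C (shn C j M) L| =
  (#|[set comp C (shmn C j m) u | u : Hom C (shn C j L) L]| *
   #|[set comp C (shmn C j l) u | u : Hom C (shn C j M) L]|)%N.
Proof. by have [h lmn_j] := dist_shmn j lmn; rewrite (card_Hom_dist_src lmn_j). Qed.

Lemma card_Hom_shn_Z_L (j : nat) :
  #|Hom C (shn C j.+1 Z) L| =
  (#|[set comp C (shmn C j.+1 l) u | u : Hom C (shn C j.+1 M) L]| *
   #|[set u : Hom C (shn C j L) L | comp C (shmn C j m) u == 0%R]|)%N.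
Proof.
have [h lmn_j] := dist_shmn j lmn; have mhl := dist_rotate lmn_j.
by rewrite (card_Hom_dist_src (dist_rotate mhl)) imset_precompN (dist_precomp_ker mhl).
Qed.

Lemma card_Hom_shn_Z_Z (i : nat) :
  #|Hom C (shn C i Z) Z| =
  (#|[set comp C u n | u : Hom C (shn C i.+1 Z) L]| *
   #|[set comp C u l | u : Hom C (shn C i Z) Z]|)%N.
Proof.
rewrite (card_Hom_postcomp _ l) -card_ker_postcomp_shm -ker_postcompN.
by rewrite (dist_postcomp_ker (dist_rotate (dist_rotate lmn))).
Qed.

End TriangleCounts.

Unset Implicit Arguments.
Set Strict Implicit.

Theorem lemma2p2 (k : finFieldType) (C : tricat k) (t : nat)
  (ht1 : (1 < t)%N) (htodd : odd t) (hper : periodic_tricat C t)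
  (Z M L : Obj C) (l : Hom C Z M) (m : Hom C M L) (n : Hom C L (sh C Z))
  (htri : dist C l m n) :
  ((#|[set comp C n s | s : Hom C (sh C Z) L]|%:R : algC) =
     sqrtC (\prod_(1 <= i < t.+1)
       ((#|Hom C (shn C i M) L|%:R : algC) ^ ((-1) ^+ i : int)
        / ((#|Hom C (shn C i Z) L|%:R : algC) ^ ((-1) ^+ i : int)
           * (#|Hom C (shn C i L) L|%:R : algC) ^ ((-1) ^+ i : int)))))
  /\
  ((#|[set comp C s n | s : Hom C (sh C Z) L]|%:R : algC) =
     sqrtC (\prod_(1 <= i < t.+1)
       ((#|Hom C (shn C i Z) M|%:R : algC) ^ ((-1) ^+ i : int)
        / ((#|Hom C (shn C i Z) L|%:R : algC) ^ ((-1) ^+ i : int)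
           * (#|Hom C (shn C i Z) Z|%:R : algC) ^ ((-1) ^+ i : int))))).
Proof.
have [_ periodic] := hper.
rewrite !big_add1 !succnK; split.
- pose A j := #|[set comp C (shmn C j m) u | u : Hom C (shn C j L) L]|.
  pose B j := #|[set comp C (shmn C j l) u | u : Hom C (shn C j M) L]|.
  pose K j := #|[set u : Hom C (shn C j L) L | comp C (shmn C j m) u == 0%R]|.
  under eq_bigr => j _ do
    rewrite (card_Hom_shn_M_L htri) (card_Hom_shn_Z_L htri) (card_Hom_precomp L (shmn C j.+1 m)).
  rewrite (@sqrtC_prod_sign_ratio _ t A B K htodd) -?(dist_precomp_ker (dist_rotate htri)) //.
  + by rewrite /K (card_ker_precomp_period periodic).
  + by move=> j; rewrite -card_Hom_precomp card_Hom_gt0.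
  + by move=> j; rewrite -(card_Hom_shn_M_L htri) card_Hom_gt0.
- pose G j := #|[set comp C u n | u : Hom C (shn C j.+1 Z) L]|.
  pose A j := #|[set comp C u l | u : Hom C (shn C j Z) Z]|.
  pose B j := #|[set comp C u m | u : Hom C (shn C j Z) M]|.
  under eq_bigr => j _ do
    rewrite (card_Hom_dist_tgt htri) (card_Hom_dist_tgt (dist_rotate htri)) (card_Hom_shn_Z_Z htri).
  rewrite (@sqrtC_prod_sign_ratio _ t A B G htodd) //.
  + by rewrite /G (card_imset_postcomp_period periodic).
  + by move=> j; rewrite -(card_Hom_shn_Z_Z htri) card_Hom_gt0.
  + by move=> j; rewrite -(card_Hom_dist_tgt htri) card_Hom_gt0.
Qed.
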